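(* Let $\mathfrak g$ be a finite-dimensional simple complex Lie algebra with root lattice $Q$ and weight lattice $\Lambda$. Then: (a) if $\mathfrak g$ is of type $A_{2k}$ ($k\ge1$) or $E_6$, then $Q\cap2\Lambda=2Q$ and $2Q\ne2\Lambda$; (b) if $\mathfrak g$ is of type $A_1$, $B_n$, $C_n$, $D_{2k+2}$ or $E_7$, then $Q\cap2\Lambda=2\Lambda$ and $2\Lambda\ne2Q$; (c) if $\mathfrak g$ is of type $E_8$, $F_4$ or $G_2$, then $Q\cap2\Lambda=2\Lambda=2Q$; (d) if $\mathfrak g$ is of type $A_{2k+1}$ or $D_{2k+3}$ with $k\ge1$, then $Q\cap2\Lambda=2Q+\mathbb Z\alpha^\diamond$ and $2Q+\mathbb Z\alpha^\diamond\ne2\Lambda$. Moreover, if $\mathfrak g$ is of type $D_n$ with $n$ odd, then $2Q+\mathbb Z\alpha^\diamond=4\mathbb Z\lambda_{n-1}+4\mathbb Z\lambda_n+\mathbb Z\alpha^\diamond+\sum_{i=1}^{n-2}2\mathbb Z\lambda_i$.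
   Context: Simple roots $\alpha_1,\dots,\alpha_n$ and fundamental weights $\lambda_1,\dots,\lambda_n$ are labelled by the Dynkin diagrams: $A_n$: chain $1-2-\cdots-n$; $D_n$: chain $1-2-\cdots-(n-2)$ with nodes $n-1$ and $n$ both attached to node $n-2$. $Q=\bigoplus_i\mathbb Z\alpha_i$, $\Lambda=\bigoplus_i\mathbb Z\lambda_i$. Define $\alpha^\diamond=\sum_{i\text{ odd}}\alpha_i$ if $\mathfrak g$ is of type $A_n$, and $\alpha^\diamond=\alpha_{n-1}+\alpha_n$ if $\mathfrak g$ is of type $D_n$. *)

(* Root and weight lattices of a simple Lie algebra, described
   in the basis of fundamental weights: Lambda = Z^n = (+)_i Z lambda_i and
   alpha_i = sum_j <alpha_i, alpha_j^vee> lambda_j (rows of the Cartan matrix). *)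
From mathcomp Require Import all_boot all_order all_algebra.
Set Implicit Arguments. Unset Strict Implicit. Unset Printing Implicit Defensive.
Import Order.TTheory GRing.Theory Num.Theory.
Local Open Scope ring_scope.

Inductive dynkin := TA | TB | TC | TD | TE | TF | TG.

(* Directed edge i -> j (i < j) of the Dynkin diagram, 1-based Bourbaki labels. *)
Definition link (t : dynkin) (n i j : nat) : bool :=
  match t with
  | TA | TB | TC | TF | TG => (j == i.+1) && (1 <= i)%N && (j <= n)%N
  | TD => ((j == i.+1) && (1 <= i)%N && (j <= n.-1)%N) || ((i == n - 2)%N && (j == n))
  | TE => ((i == 1%N) && (j == 3%N)) || ((i == 2%N) && (j == 4%N))
          || ((j == i.+1) && (3 <= i)%N && (j <= n)%N)
  end.

Definition adj (t : dynkin) (n i j : nat) : bool := link t n i j || link t n j i.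

(* squared length of alpha_i (short roots have length 1) *)
Definition len (t : dynkin) (n i : nat) : nat :=
  match t with
  | TA | TD | TE => 1
  | TB => if i == n then 1 else 2
  | TC => if i == n then 2 else 1
  | TF => if (i <= 2)%N then 2 else 1
  | TG => if i == 2%N then 3 else 1
  end.

(* cartan t n i j = <alpha_i, alpha_j^vee> = 2 (alpha_i,alpha_j)/(alpha_j,alpha_j),
   the coefficient of lambda_j in alpha_i *)
Definition cartan (t : dynkin) (n i j : nat) : int :=
  if i == j then 2
  else if adj t n i j then - ((maxn (len t n i %/ len t n j) 1)%N%:Z)
  else 0.

(* fundamental weight lambda_i and simple root alpha_i (1-based i) in 'rV[int]_n *)
Definition lambda (n i : nat) : 'rV[int]_n := \row_(j < n) ((j.+1 == i)%:R).
Definition alpha (t : dynkin) (n i : nat) : 'rV[int]_n := \row_(j < n) cartan t n i j.+1.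

Definition lat n := 'rV[int]_n -> Prop.

Definition zspan n (I : finType) (g : I -> 'rV[int]_n) : lat n :=
  fun v => exists c : I -> int, v = \sum_(i : I) g i *~ c i.

Definition Zmul n (a : 'rV[int]_n) : lat n := zspan (fun _ : 'I_1 => a).
Definition latI n (S T : lat n) : lat n := fun v => S v /\ T v.
Definition latD n (S T : lat n) : lat n := fun v => exists s t, S s /\ T t /\ v = s + t.
Definition lat2 n (S : lat n) : lat n := fun v => exists w, S w /\ v = w *+ 2.
Definition lat_eq n (S T : lat n) : Prop := forall v, S v <-> T v.

Definition rootQ (t : dynkin) (n : nat) : lat n := zspan (fun i : 'I_n => alpha t n i.+1).
Definition weightL (n : nat) : lat n := zspan (fun i : 'I_n => lambda n i.+1).

Definition alpha_diamond (t : dynkin) (n : nat) : 'rV[int]_n :=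
  match t with
  | TA => \sum_(i < n | odd i.+1) alpha t n i.+1
  | TD => alpha t n n.-1 + alpha t n n
  | _ => 0
  end.

Arguments lambda : clear implicits.
Arguments alpha : clear implicits.
Arguments rootQ : clear implicits.
Arguments weightL : clear implicits.
Arguments alpha_diamond : clear implicits.

(* Everything is computed in the basis of fundamental weights, where Lambda = Z^n and alpha_i
   is the i-th row of the Cartan matrix.  Q meets 2 Lambda in 2 Q (resp. in all of 2 Lambda) as
   soon as N lambda_i lies in Q for every i, for some odd N (resp. for N = 2); such multiples are
   produced along the chains of the Dynkin diagram from lambda_(i+1) = 2 lambda_i - lambda_(i-1)
   - alpha_i, and for the exceptional types by checking explicit coordinates on the simple roots.
   The inequalities come from integer linear forms divisible by some m on every simple root but
   not on a well-chosen weight.  In case (d) the Cartan matrix is symmetric, so sum_i c_i alpha_i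
   lies in 2 Lambda iff c is in the kernel of the Cartan matrix mod 2, and that kernel is spanned
   by the coefficients of alpha^diamond.  For odd D_n, both sides of the last equality are the
   v in 2 Lambda with v_(n-1) = v_n mod 4. *)

From mathcomp Require Import all_boot all_order all_algebra zify ring.
Import GRing.Theory Num.Theory.
Local Open Scope ring_scope.
Set Implicit Arguments. Unset Strict Implicit. Unset Printing Implicit Defensive.

Lemma mulmxzE m n (A : 'M[int]_(m, n)) (z : int) i j : (A *~ z) i j = A i j * z.
Proof.
case: z => k; first by rewrite mulmxnE -mulrzz.
by rewrite NegzE !mulrNz mxE mulmxnE -mulrzz mulrNz.
Qed.

Ltac row_ring := apply/rowP => ?; rewrite !(mxE, mulmxnE, mulmxzE); ring.

Lemma row_mul2n_inj n : injective (fun x : 'rV[int]_n => x *+ 2).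
Proof.
move=> x y /= /rowP e; apply/rowP => j; have := e j.
rewrite !mulmxnE !mulr2n; move: (x 0 j) (y 0 j) => a b; lia.
Qed.

Lemma mulrzMn n (x : 'rV[int]_n) (z : int) k : (x *~ z) *+ k = (x *+ k) *~ z.
Proof. by rewrite !pmulrn -!mulrzA mulrC. Qed.

Section ZSpan.
Variables (n : nat) (I : finType) (g : I -> 'rV[int]_n).

Lemma zspan0 : zspan g 0.
Proof. by exists (fun _ => 0); rewrite big1 // => i _; rewrite mulr0z. Qed.

Lemma zspanD x y : zspan g x -> zspan g y -> zspan g (x + y).
Proof.
move=> [c ->] [d ->]; exists (fun i => c i + d i).
by rewrite -big_split; apply: eq_bigr => i _; rewrite mulrzDr.
Qed.

Lemma zspanZ x z : zspan g x -> zspan g (x *~ z).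
Proof.
move=> [c ->]; exists (fun i => c i * z).
by rewrite mulrz_suml; apply: eq_bigr => i _; rewrite mulrzA.
Qed.

Lemma zspanN x : zspan g x -> zspan g (- x).
Proof. by move=> hx; rewrite -mulrN1z; apply: zspanZ. Qed.

Lemma zspanB x y : zspan g x -> zspan g y -> zspan g (x - y).
Proof. by move=> hx hy; apply: zspanD hx (zspanN hy). Qed.

Lemma zspanMn x k : zspan g x -> zspan g (x *+ k).
Proof. by move=> hx; rewrite pmulrn; apply: zspanZ. Qed.

Lemma zspan_gen k : zspan g (g k).
Proof.
exists (fun i => (i == k)%:R); rewrite (bigD1 k) //= eqxx mulr1z big1 ?addr0 //.
by move=> i /negbTE ->; rewrite mulr0z.
Qed.

Lemma zspan_sum (J : finType) (P : pred J) (f : J -> 'rV[int]_n) :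
  (forall j, P j -> zspan g (f j)) -> zspan g (\sum_(j | P j) f j).
Proof. by move=> hf; apply: (big_ind (zspan g)) => //; [apply: zspan0 | apply: zspanD]. Qed.

Lemma zspan_sub (J : finType) (h : J -> 'rV[int]_n) v :
  (forall j, zspan g (h j)) -> zspan h v -> zspan g v.
Proof. by move=> hh [c ->]; apply: zspan_sum => j _; apply: zspanZ. Qed.

Lemma zspan_Zmul a v : zspan g a -> Zmul a v -> zspan g v.
Proof. by move=> ha; apply: zspan_sub. Qed.

Lemma zspan_latD (S T : lat n) v : (forall s, S s -> zspan g s) -> (forall t, T t -> zspan g t) ->
  latD S T v -> zspan g v.
Proof. by move=> hS hT [s [t [/hS hs [/hT ht ->]]]]; apply: zspanD. Qed.

End ZSpan.

Lemma Zmul_intro n (a : 'rV[int]_n) z : Zmul a (a *~ z).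
Proof. by exists (fun _ => z); rewrite big_ord1. Qed.

Lemma latD_intro n (S T : lat n) s t : S s -> T t -> latD S T (s + t).
Proof. by move=> hs ht; exists s, t. Qed.

Lemma lat2_intro n (S : lat n) w : S w -> lat2 S (w *+ 2).
Proof. by move=> hw; exists w. Qed.

Lemma row_lambda_expansion n (u : 'rV[int]_n) : u = \sum_(i < n) lambda n i.+1 *~ u 0 i.
Proof.
apply/rowP => j; rewrite summxE (bigD1 j) //= big1 ?mulmxzE ?mxE ?eqxx ?mul1r ?addr0 //.
move=> i hij; rewrite mulmxzE mxE; case: eqP => [e|]; last by rewrite mul0r.
by case/eqP: hij; apply: val_inj => /=; lia.
Qed.

Lemma weightL_all n v : weightL n v.
Proof. by exists (fun i => v 0 i); apply: row_lambda_expansion. Qed.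

Lemma lat2_weightLP n v : lat2 (weightL n) v <-> forall j : 'I_n, (2 %| v 0%R j)%Z.
Proof.
split=> [[w [_ ->]] j | hv].
  by rewrite mulmxnE mulr2n; apply/dvdzP; exists (w 0 j); ring.
exists (\row_j (v 0%R j %/ 2)%Z); split; first exact: weightL_all.
by apply/rowP => j; rewrite mulmxnE mxE mulr2n -mulr2z -mulrzr divzK.
Qed.

Lemma lat2_weightLE n v :
  lat2 (weightL n) v <-> zspan (fun i : 'I_n => lambda n i.+1 *+ 2) v.
Proof.
have sum2 (c : 'I_n -> int) :
    \sum_(i < n) (lambda n i.+1 *+ 2) *~ c i = (\sum_(i < n) lambda n i.+1 *~ c i) *+ 2.
  by rewrite -sumrMnl; apply: eq_bigr => i _; rewrite mulrzMn.
split=> [[w [[c ->] ->]] | [c ->]]; first by exists c; rewrite sum2.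
by rewrite sum2; apply/lat2_intro/weightL_all.
Qed.

Definition lform n (w : nat -> int) (x : 'rV[int]_n) : int := \sum_(j < n) w j.+1 * x 0 j.

Section LinearForm.
Variables (n : nat) (w : nat -> int).

Lemma lformD (x y : 'rV[int]_n) : lform w (x + y) = lform w x + lform w y.
Proof. by rewrite /lform -big_split; apply: eq_bigr => j _; rewrite mxE mulrDr. Qed.

Lemma lformZ (x : 'rV[int]_n) z : lform w (x *~ z) = lform w x * z.
Proof. by rewrite /lform mulr_suml; apply: eq_bigr => j _; rewrite mulmxzE mulrA. Qed.

Lemma lformN (x : 'rV[int]_n) : lform w (- x) = - lform w x.
Proof. by rewrite -mulrN1z lformZ mulrN1. Qed.

Lemma lformB (x y : 'rV[int]_n) : lform w (x - y) = lform w x - lform w y.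
Proof. by rewrite lformD lformN. Qed.

Lemma lformMn (x : 'rV[int]_n) k : lform w (x *+ k) = lform w x *+ k.
Proof. by rewrite pmulrn lformZ -mulrzz pmulrn. Qed.

Lemma lform_sum (J : finType) (P : pred J) (f : J -> 'rV[int]_n) :
  lform w (\sum_(j | P j) f j) = \sum_(j | P j) lform w (f j).
Proof. by rewrite /lform exchange_big; apply: eq_bigr => j _; rewrite summxE mulr_sumr. Qed.

Lemma lform_lambda i : lform w (lambda n i) = if (0 < i <= n)%N then w i else 0.
Proof.
rewrite /lform; case: ifP => hi.
  have hk : (i.-1 < n)%N by lia.
  rewrite (bigD1 (Ordinal hk)) //= big1 ?addr0.
    by rewrite mxE /= prednK ?eqxx ?mulr1 //; lia.
  move=> j hj; rewrite mxE; case: eqP => [e|]; last by rewrite mulr0.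
  by case/eqP: hj; apply: val_inj => /=; lia.
rewrite big1 // => j _; rewrite mxE; case: eqP => [e|]; last by rewrite mulr0.
by move/negbT: hi; have := ltn_ord j; lia.
Qed.

End LinearForm.

Ltac case_lia := repeat (case: ifP => ?); rewrite ?mulr2n; try lia.

Lemma rootQ_alpha t n i : (0 < i <= n)%N -> rootQ t n (alpha t n i).
Proof.
move=> hi; have hk : (i.-1 < n)%N by lia.
have -> : i = (Ordinal hk).+1 by rewrite /= prednK //; lia.
exact: (zspan_gen (fun i : 'I_n => alpha t n i.+1)).
Qed.

Lemma rootQ_lform_dvd t n w (m : int) v :
  (forall i, (0 < i <= n)%N -> (m %| lform w (alpha t n i))%Z) -> rootQ t n v -> (m %| lform w v)%Z.
Proof.
move=> hw [c ->]; rewrite lform_sum; apply: rpred_sum => i _.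
by rewrite lformZ dvdz_mulr //; apply: hw; have := ltn_ord i; lia.
Qed.

Lemma rootQ_muln t n N :
  (forall i, (0 < i <= n)%N -> rootQ t n (lambda n i *+ N)) -> forall u, rootQ t n (u *+ N).
Proof.
move=> hN u; rewrite (row_lambda_expansion u) -sumrMnl; apply: zspan_sum => i _.
by rewrite mulrzMn; apply/zspanZ/hN; have := ltn_ord i; lia.
Qed.

Lemma rootQ_cap_lat2_odd t n N : odd N ->
  (forall i, (0 < i <= n)%N -> rootQ t n (lambda n i *+ N)) ->
  lat_eq (latI (rootQ t n) (lat2 (weightL n))) (lat2 (rootQ t n)).
Proof.
move=> oddN hN v; split=> [[hv [u [_ ev]]] | [w [hw ->]]].
  exists u; split=> //; have -> : u = v *+ (N./2).+1 - u *+ N.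
    by rewrite ev -{2}(odd_double_half N) oddN -addnn /=; row_ring.
  by apply: zspanB; [apply: zspanMn | apply: rootQ_muln].
by split; [apply: zspanMn | apply/lat2_intro/weightL_all].
Qed.

Lemma rootQ_cap_lat2_two t n :
  (forall i, (0 < i <= n)%N -> rootQ t n (lambda n i *+ 2)) ->
  lat_eq (latI (rootQ t n) (lat2 (weightL n))) (lat2 (weightL n)).
Proof.
move=> h2 v; split=> [[] // | hv]; split=> //.
by case: hv => u [_ ->]; apply: rootQ_muln.
Qed.

Lemma lat2_rootQ_neq t n v : ~ rootQ t n v -> ~ lat_eq (lat2 (rootQ t n)) (lat2 (weightL n)).
Proof.
move=> hv /(_ (v *+ 2)) [_ /(_ (lat2_intro (weightL_all v)))] [w [hw /row_mul2n_inj ew]].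
by apply: hv; rewrite ew.
Qed.

Lemma lat2_weightL_neq t n v : ~ rootQ t n v -> ~ lat_eq (lat2 (weightL n)) (lat2 (rootQ t n)).
Proof. by move=> /lat2_rootQ_neq hv e; apply: hv => u; rewrite e. Qed.

Lemma rootQ_full t n : (forall i, (0 < i <= n)%N -> rootQ t n (lambda n i)) ->
  lat_eq (latI (rootQ t n) (lat2 (weightL n))) (lat2 (weightL n)) /\
  lat_eq (lat2 (weightL n)) (lat2 (rootQ t n)).
Proof.
move=> h1; have hQ u : rootQ t n u.
  by rewrite -(mulr1n u); apply: rootQ_muln => i /h1; rewrite mulr1n.
split; first by apply: rootQ_cap_lat2_two => *; apply: hQ.
by move=> v; split=> -[w [_ ->]]; apply: lat2_intro; [apply: hQ | apply: weightL_all].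
Qed.

Ltac cartan_row := apply/rowP => j; rewrite !mxE /cartan /adj /link /len; have := ltn_ord j;
  repeat (case: eqP => ?; try (exfalso; lia)); repeat (case: leqP => ?; try (exfalso; lia));
  simpl; try lia.

Lemma lambda0 n : lambda n 0 = 0.
Proof. by apply/rowP => j; rewrite !mxE. Qed.

Lemma lambda_out n i : (n < i)%N -> lambda n i = 0.
Proof. by move=> hi; apply/rowP => j; rewrite !mxE; case: eqP => //; have := ltn_ord j; lia. Qed.

Lemma alphaA n i : (0 < i <= n)%N -> alpha TA n i = lambda n i *+ 2 - lambda n i.-1 - lambda n i.+1.
Proof. by move=> hi; cartan_row. Qed.

Lemma alphaB_chain n i : (0 < i <= n - 2)%N ->
  alpha TB n i = lambda n i *+ 2 - lambda n i.-1 - lambda n i.+1.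
Proof. by move=> hi; cartan_row. Qed.

Lemma alphaB_penult n : (2 <= n)%N ->
  alpha TB n n.-1 = lambda n n.-1 *+ 2 - lambda n n.-2 - lambda n n *+ 2.
Proof. by move=> hn; cartan_row. Qed.

Lemma alphaB_last n : (2 <= n)%N -> alpha TB n n = lambda n n *+ 2 - lambda n n.-1.
Proof. by move=> hn; cartan_row. Qed.

Lemma alphaC_chain n i : (0 < i <= n.-1)%N ->
  alpha TC n i = lambda n i *+ 2 - lambda n i.-1 - lambda n i.+1.
Proof. by move=> hi; cartan_row. Qed.

Lemma alphaC_last n : (2 <= n)%N -> alpha TC n n = lambda n n *+ 2 - lambda n n.-1 *+ 2.
Proof. by move=> hn; cartan_row. Qed.

Lemma alphaD_chain n i : (0 < i <= n - 3)%N ->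
  alpha TD n i = lambda n i *+ 2 - lambda n i.-1 - lambda n i.+1.
Proof. by move=> hi; cartan_row. Qed.

Lemma alphaD_branch n : (4 <= n)%N ->
  alpha TD n (n - 2) = lambda n (n - 2) *+ 2 - lambda n (n - 3) - lambda n n.-1 - lambda n n.
Proof. by move=> hn; cartan_row. Qed.

Lemma alphaD_penult n : (4 <= n)%N -> alpha TD n n.-1 = lambda n n.-1 *+ 2 - lambda n (n - 2).
Proof. by move=> hn; cartan_row. Qed.

Lemma alphaD_last n : (4 <= n)%N -> alpha TD n n = lambda n n *+ 2 - lambda n (n - 2).
Proof. by move=> hn; cartan_row. Qed.

Lemma rootQ_chain t n m : (m <= n)%N ->
  (forall i, (0 < i <= m)%N -> alpha t n i = lambda n i *+ 2 - lambda n i.-1 - lambda n i.+1) ->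
  forall i, (i <= m.+1)%N -> rootQ t n (lambda n i - lambda n 1 *+ i).
Proof.
move=> hmn hchain.
suff H i : (i <= m)%N ->
    rootQ t n (lambda n i - lambda n 1 *+ i) /\ rootQ t n (lambda n i.+1 - lambda n 1 *+ i.+1).
  by case=> [|i] hi; [case: (H 0%N isT) | case: (H i hi)].
elim: i => [|i IH] hi; first by rewrite lambda0 !subrr; split; apply: zspan0.
case: (IH (ltnW hi)) => hi0 hi1; split=> //.
have -> : lambda n i.+2 - lambda n 1 *+ i.+2 =
    (lambda n i.+1 - lambda n 1 *+ i.+1) *+ 2 - (lambda n i - lambda n 1 *+ i) - alpha t n i.+1.
  by rewrite hchain /=; [row_ring | lia].
by apply: zspanB; [apply: zspanB; first apply: zspanMn | apply: rootQ_alpha; lia].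
Qed.

Lemma A_chain n i : (i <= n.+1)%N -> rootQ TA n (lambda n i - lambda n 1 *+ i).
Proof. exact: rootQ_chain (leqnn n) (@alphaA n) i. Qed.

Lemma A_muln n i : rootQ TA n (lambda n i *+ n.+1).
Proof.
have top : rootQ TA n (lambda n 1 *+ n.+1).
  by have := A_chain (leqnn n.+1); rewrite lambda_out // sub0r => /zspanN; rewrite opprK.
case: (leqP i n.+1) => hi; last by rewrite lambda_out ?mul0rn; [apply: zspan0 | lia].
have -> : lambda n i *+ n.+1 = (lambda n i - lambda n 1 *+ i) *+ n.+1 + (lambda n 1 *+ n.+1) *+ i.
  by row_ring.
by apply: zspanD; apply: zspanMn; [apply: A_chain | apply: top].
Qed.

Lemma A_lform_dvd n v : rootQ TA n v -> (n.+1%:Z %| lform Posz v)%Z.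
Proof.
apply: rootQ_lform_dvd => i hi; rewrite alphaA // !lformB lformMn !lform_lambda.
by case_lia; apply/dvdzP; first [exists 0; lia | exists 1; lia].
Qed.

Lemma A_lambda1_muln_notin n k : (0 < k < n.+1)%N -> ~ rootQ TA n (lambda n 1 *+ k).
Proof.
move=> hk /A_lform_dvd; rewrite lformMn lform_lambda; case_lia.
by rewrite natz dvdzE /= => /dvdn_leq; lia.
Qed.

Lemma A_lambda1_notin n : (0 < n)%N -> ~ rootQ TA n (lambda n 1).
Proof. by move=> n0; rewrite -[lambda n 1]mulr1n; apply: A_lambda1_muln_notin; lia. Qed.

Lemma B_lambda n i : (2 <= n)%N -> (i < n)%N -> rootQ TB n (lambda n i).
Proof.
move=> hn hi.
have chain j : (j <= n.-1)%N -> rootQ TB n (lambda n j - lambda n 1 *+ j).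
  by move=> hj; apply: (@rootQ_chain _ _ (n - 2)) => [|k hk|]; [lia | apply: alphaB_chain | lia].
have l1 : rootQ TB n (lambda n 1).
  have -> : lambda n 1 = alpha TB n n.-1 + alpha TB n n - (lambda n n.-1 - lambda n 1 *+ n.-1)
      + (lambda n n.-2 - lambda n 1 *+ n.-2).
    rewrite alphaB_penult // alphaB_last //; case: n hn {hi chain} => [|[|m]] //= _; row_ring.
  by apply: zspanD; [apply: zspanB; [apply: zspanD; apply: rootQ_alpha | apply: chain] |
                     apply: chain]; lia.
have -> : lambda n i = (lambda n i - lambda n 1 *+ i) + lambda n 1 *+ i by row_ring.
by apply: zspanD; [apply: chain; lia | apply: zspanMn].
Qed.

Lemma B_lambda_muln2 n i : (2 <= n)%N -> rootQ TB n (lambda n i *+ 2).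
Proof.
move=> hn; case: (ltnP i n) => hi; first by apply/zspanMn/B_lambda.
case: (ltnP n i) => hi'; first by rewrite lambda_out // mul0rn; apply: zspan0.
have -> : i = n by lia.
have -> : lambda n n *+ 2 = alpha TB n n + lambda n n.-1 by rewrite alphaB_last //; row_ring.
by apply: zspanD; [apply: rootQ_alpha | apply: B_lambda]; lia.
Qed.

Lemma B_lambda_last_notin n : (2 <= n)%N -> ~ rootQ TB n (lambda n n).
Proof.
move=> hn; pose w j : int := if j == n then 1 else 0.
have even_w v : rootQ TB n v -> (2 %| lform w v)%Z.
  apply: rootQ_lform_dvd => i hi.
  have [hi1 | [-> | ->]] : (i < n.-1)%N \/ i = n.-1 \/ i = n by lia.
  - by rewrite alphaB_chain; [rewrite !lformB lformMn !lform_lambda /w; case_lia | lia].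
  - by rewrite alphaB_penult // !lformB !lformMn !lform_lambda /w; case_lia.
  - by rewrite alphaB_last // !lformB lformMn !lform_lambda /w; case_lia.
by move=> /even_w; rewrite lform_lambda /w; case_lia.
Qed.

Lemma C_chain n i : (i <= n)%N -> rootQ TC n (lambda n i - lambda n 1 *+ i).
Proof.
by move=> hi; apply: (@rootQ_chain _ _ n.-1) => [|k hk|]; [lia | apply: alphaC_chain | lia].
Qed.

Lemma C_lambda_muln2 n i : (2 <= n)%N -> rootQ TC n (lambda n i *+ 2).
Proof.
move=> hn; case: (leqP i n) => hi; last by rewrite lambda_out // mul0rn; apply: zspan0.
have l1 : rootQ TC n (lambda n 1 *+ 2).
  have -> : lambda n 1 *+ 2 = alpha TC n n - (lambda n n - lambda n 1 *+ n) *+ 2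
      + (lambda n n.-1 - lambda n 1 *+ n.-1) *+ 2.
    rewrite alphaC_last //; case: n hn {hi} => [|[|m]] //= _; row_ring.
  apply: zspanD; first apply: zspanB; try apply: zspanMn;
    [apply: rootQ_alpha | apply: C_chain | apply: C_chain]; lia.
have -> : lambda n i *+ 2 = (lambda n i - lambda n 1 *+ i) *+ 2 + (lambda n 1 *+ 2) *+ i.
  by row_ring.
by apply: zspanD; apply: zspanMn; [apply: C_chain | apply: l1].
Qed.

Lemma C_lambda1_notin n : (2 <= n)%N -> ~ rootQ TC n (lambda n 1).
Proof.
move=> hn; have even_w v : rootQ TC n v -> (2 %| lform Posz v)%Z.
  apply: rootQ_lform_dvd => i hi.
  have [hin | ->] : (i < n)%N \/ i = n by lia.
  - by rewrite alphaC_chain; [rewrite !lformB lformMn !lform_lambda; case_lia | lia].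
  - by rewrite alphaC_last // !lformB !lformMn !lform_lambda; case_lia.
by move=> /even_w; rewrite lform_lambda; case_lia.
Qed.

Lemma D_chain n i : (4 <= n)%N -> (i <= n - 2)%N -> rootQ TD n (lambda n i - lambda n 1 *+ i).
Proof.
by move=> hn hi; apply: (@rootQ_chain _ _ (n - 3)) => [|k hk|]; [lia | apply: alphaD_chain | lia].
Qed.

Lemma D_lambda_muln2 n i : (4 <= n)%N -> (i <= n - 2)%N -> rootQ TD n (lambda n i *+ 2).
Proof.
move=> hn hi.
have l1 : rootQ TD n (lambda n 1 *+ 2).
  have -> : lambda n 1 *+ 2 = alpha TD n (n - 2) *+ 2 + alpha TD n n.-1 + alpha TD n n
      - (lambda n (n - 2) - lambda n 1 *+ (n - 2)) *+ 2
      + (lambda n (n - 3) - lambda n 1 *+ (n - 3)) *+ 2.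
    rewrite alphaD_branch // alphaD_penult // alphaD_last //.
    by case: n hn {hi} => [|[|[|[|m]]]] //= _; rewrite !subSS subn0 /=; row_ring.
  apply: zspanD; first apply: zspanB; first (apply: zspanD; first apply: zspanD);
    try apply: zspanMn; try apply: rootQ_alpha; try apply: D_chain; lia.
have -> : lambda n i *+ 2 = (lambda n i - lambda n 1 *+ i) *+ 2 + (lambda n 1 *+ 2) *+ i by row_ring.
by apply: zspanD; apply: zspanMn; [apply: D_chain | apply: l1].
Qed.

Lemma D_spin_muln4 n : (4 <= n)%N ->
  rootQ TD n (lambda n n.-1 *+ 4) /\ rootQ TD n (lambda n n *+ 4).
Proof.
move=> hn; have l2 := D_lambda_muln2 hn (leqnn (n - 2)).
have a1 : rootQ TD n (alpha TD n n.-1) by apply: rootQ_alpha; lia.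
have a2 : rootQ TD n (alpha TD n n) by apply: rootQ_alpha; lia.
rewrite -(subrK (lambda n (n - 2) *+ 2) (lambda n n.-1 *+ 4)).
rewrite -(subrK (lambda n (n - 2) *+ 2) (lambda n n *+ 4)).
rewrite (_ : lambda n n.-1 *+ 4 - _ = alpha TD n n.-1 *+ 2);
  last by rewrite alphaD_penult //; row_ring.
rewrite (_ : lambda n n *+ 4 - _ = alpha TD n n *+ 2); last by rewrite alphaD_last //; row_ring.
by split; apply: zspanD => //; apply: zspanMn.
Qed.

Lemma D_even_lambda_muln2 n i : (4 <= n)%N -> ~~ odd n -> rootQ TD n (lambda n i *+ 2).
Proof.
move=> hn evn; case: (leqP i (n - 2)) => hi; first exact: D_lambda_muln2.
have lmid : rootQ TD n (lambda n (n - 2)).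
  have -> : lambda n (n - 2) =
      (lambda n (n - 2) - lambda n 1 *+ (n - 2)) + (lambda n 1 *+ 2) *+ (n - 2)./2.
    have ek : (n - 2 = 2 * (n - 2)./2)%N by lia.
    by rewrite -mulrnA -ek subrK.
  by apply: zspanD; [apply: D_chain | apply/zspanMn/D_lambda_muln2]; lia.
have [-> | [-> | hin]] : i = n.-1 \/ i = n \/ (n < i)%N by lia.
- have -> : lambda n n.-1 *+ 2 = alpha TD n n.-1 + lambda n (n - 2).
    by rewrite alphaD_penult //; row_ring.
  by apply: zspanD => //; apply: rootQ_alpha; lia.
- have -> : lambda n n *+ 2 = alpha TD n n + lambda n (n - 2) by rewrite alphaD_last //; row_ring.
  by apply: zspanD => //; apply: rootQ_alpha; lia.
- by rewrite lambda_out // mul0rn; apply: zspan0.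
Qed.

Definition spin_diff n (j : nat) : int := if j == n.-1 then 1 else if j == n then -1 else 0.

Lemma lform_spin_diff_alphaD n i : (4 <= n)%N -> (0 < i <= n)%N ->
  lform (spin_diff n) (alpha TD n i) = (if i == n.-1 then 2 else if i == n then -2 else 0 : int).
Proof.
move=> hn hi.
have [hi1 | [-> | [-> | ->]]] : ((i <= n - 3) \/ i = n - 2 \/ i = n.-1 \/ i = n)%N by lia.
- by rewrite alphaD_chain; [rewrite !lformB lformMn !lform_lambda /spin_diff; case_lia | lia].
- by rewrite alphaD_branch // !lformB lformMn !lform_lambda /spin_diff; case_lia.
- by rewrite alphaD_penult // !lformB lformMn !lform_lambda /spin_diff; case_lia.
- by rewrite alphaD_last // !lformB lformMn !lform_lambda /spin_diff; case_lia.
Qed.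

Lemma D_lform_spin_diff_even n v : (4 <= n)%N -> rootQ TD n v -> (2 %| lform (spin_diff n) v)%Z.
Proof. by move=> hn; apply: rootQ_lform_dvd => i hi; rewrite lform_spin_diff_alphaD //; case_lia. Qed.

Lemma D_lambda_last_notin n : (4 <= n)%N -> ~ rootQ TD n (lambda n n).
Proof. by move=> hn /(D_lform_spin_diff_even hn); rewrite lform_lambda /spin_diff; case_lia. Qed.

(* [\sum] is locked, so [vm_compute] needs this unlocked copy. *)
Definition fsum (G : nat -> int) n : int := foldr (fun i a => G i + a) 0 (iota 0 n).

Lemma fsumE (G : nat -> int) n : \sum_(i < n) G i = fsum G n.
Proof.
rewrite -(big_mkord xpredT G) /index_iota subn0 /fsum.
by elim: (iota 0 n) => [|a s IH]; rewrite ?big_nil ?big_cons ?IH.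
Qed.

(* Row k of [tab] lists the coordinates of N lambda_k on the simple roots. *)
Definition root_coords_ok t n N (tab : seq (seq int)) k : bool :=
  all (fun j => (j.+1 == k)%:R *+ N == fsum (fun i => cartan t n i.+1 j.+1 * (nth [::] tab k.-1)`_i) n)
      (iota 0 n).

Lemma rootQ_root_coords t n N tab :
  all (root_coords_ok t n N tab) (iota 1 n) -> forall k, (0 < k <= n)%N -> rootQ t n (lambda n k *+ N).
Proof.
move=> /allP htab k hk.
have /allP hk' : root_coords_ok t n N tab k by apply: htab; rewrite mem_iota; lia.
exists (fun i : 'I_n => (nth [::] tab k.-1)`_i); apply/rowP => j; rewrite mulmxnE mxE summxE.
move: (hk' j); rewrite mem_iota /= => /(_ (ltn_ord j)) /eqP ->.
by rewrite -fsumE; apply: eq_bigr => i _; rewrite mulmxzE mxE.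
Qed.

Definition lform_dvd_on_roots t n (w : seq int) (m : int) : bool :=
  all (fun i => (m %| fsum (fun j => w`_j * cartan t n i j.+1) n)%Z) (iota 1 n).

Lemma rootQ_lambda_notin t n w m k : lform_dvd_on_roots t n w m -> ~~ (m %| w`_k.-1)%Z ->
  (0 < k <= n)%N -> ~ rootQ t n (lambda n k).
Proof.
move=> /allP hw hk hkn hQ; pose w' j := w`_j.-1.
have : (m %| lform w' (lambda n k))%Z.
  apply: rootQ_lform_dvd hQ => i hi; move: (hw i); rewrite mem_iota => /(_ ltac:(lia)).
  by rewrite /lform -fsumE; congr (_ %| _)%Z; apply: eq_bigr => j _; rewrite mxE.
by rewrite lform_lambda hkn; apply/negP.
Qed.

Definition tabE6 : seq (seq int) :=
  [:: [:: 4; 3; 5; 6; 4; 2]; [:: 3; 6; 6; 9; 6; 3]; [:: 5; 6; 10; 12; 8; 4];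
      [:: 6; 9; 12; 18; 12; 6]; [:: 4; 6; 8; 12; 10; 5]; [:: 2; 3; 4; 6; 5; 4]].
Definition tabE7 : seq (seq int) :=
  [:: [:: 4; 4; 6; 8; 6; 4; 2]; [:: 4; 7; 8; 12; 9; 6; 3]; [:: 6; 8; 12; 16; 12; 8; 4];
      [:: 8; 12; 16; 24; 18; 12; 6]; [:: 6; 9; 12; 18; 15; 10; 5]; [:: 4; 6; 8; 12; 10; 8; 4];
      [:: 2; 3; 4; 6; 5; 4; 3]].
Definition tabE8 : seq (seq int) :=
  [:: [:: 4; 5; 7; 10; 8; 6; 4; 2]; [:: 5; 8; 10; 15; 12; 9; 6; 3];
      [:: 7; 10; 14; 20; 16; 12; 8; 4]; [:: 10; 15; 20; 30; 24; 18; 12; 6];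
      [:: 8; 12; 16; 24; 20; 15; 10; 5]; [:: 6; 9; 12; 18; 15; 12; 8; 4];
      [:: 4; 6; 8; 12; 10; 8; 6; 3]; [:: 2; 3; 4; 6; 5; 4; 3; 2]].
Definition tabF4 : seq (seq int) :=
  [:: [:: 2; 3; 4; 2]; [:: 3; 6; 8; 4]; [:: 2; 4; 6; 3]; [:: 1; 2; 3; 2]].
Definition tabG2 : seq (seq int) := [:: [:: 2; 1]; [:: 3; 2]].

Lemma E6_lambda_muln3 k : (0 < k <= 6)%N -> rootQ TE 6 (lambda 6 k *+ 3).
Proof. by apply: (rootQ_root_coords (tab := tabE6)); vm_compute. Qed.

Lemma E7_lambda_muln2 k : (0 < k <= 7)%N -> rootQ TE 7 (lambda 7 k *+ 2).
Proof. by apply: (rootQ_root_coords (tab := tabE7)); vm_compute. Qed.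

Lemma E8_lambda k : (0 < k <= 8)%N -> rootQ TE 8 (lambda 8 k).
Proof. by rewrite -[lambda 8 k]mulr1n; apply: (rootQ_root_coords (tab := tabE8)); vm_compute. Qed.

Lemma F4_lambda k : (0 < k <= 4)%N -> rootQ TF 4 (lambda 4 k).
Proof. by rewrite -[lambda 4 k]mulr1n; apply: (rootQ_root_coords (tab := tabF4)); vm_compute. Qed.

Lemma G2_lambda k : (0 < k <= 2)%N -> rootQ TG 2 (lambda 2 k).
Proof. by rewrite -[lambda 2 k]mulr1n; apply: (rootQ_root_coords (tab := tabG2)); vm_compute. Qed.

Lemma E6_lambda1_notin : ~ rootQ TE 6 (lambda 6 1).
Proof. by apply: (@rootQ_lambda_notin _ _ [:: 1; 0; 2; 0; 1; 2] 3); vm_compute. Qed.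

Lemma E7_lambda2_notin : ~ rootQ TE 7 (lambda 7 2).
Proof. by apply: (@rootQ_lambda_notin _ _ [:: 0; 1; 0; 0; 1; 0; 1] 2); vm_compute. Qed.

(* The coefficients c_0, ..., c_(n-1) re-indexed by the labels 1, ..., n, and 0 off range. *)
Definition labelled n (c : 'I_n -> int) (k : nat) : int :=
  if (0 < k)%N then (if insub k.-1 is Some i then c i else 0) else 0.

Lemma labelled_ord n (c : 'I_n -> int) (i : 'I_n) : labelled c i.+1 = c i.
Proof.
rewrite /labelled /=; case: insubP => [j _ ej|]; last by rewrite ltn_ord.
by congr c; apply: val_inj.
Qed.

Lemma labelled_out n (c : 'I_n -> int) k : ~~ (0 < k <= n)%N -> labelled c k = 0.
Proof.
move=> hk; rewrite /labelled; case: ifP => // k0; case: insubP => // j _ ej.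
by have := ltn_ord j; rewrite ej; lia.
Qed.

Lemma lform_labelled_lambda n (c : 'I_n -> int) k : lform (labelled c) (lambda n k) = labelled c k.
Proof. by rewrite lform_lambda; case: ifP => // hk; rewrite labelled_out // hk. Qed.

Lemma lform_labelled_chain_row n (c : 'I_n -> int) p :
  (2 %| lform (labelled c) (lambda n p *+ 2 - lambda n p.-1 - lambda n p.+1))%Z ->
  (2 %| labelled c p.-1 + labelled c p.+1)%Z.
Proof.
rewrite !lformB lformMn !lform_labelled_lambda mulr2n.
by move: (labelled c p) (labelled c p.-1) (labelled c p.+1) => a b d; lia.
Qed.

Lemma rootQ_coord_sym t n (c : 'I_n -> int) (j : 'I_n) :
  (forall i k, cartan t n i k = cartan t n k i) ->
  (\sum_(i < n) alpha t n i.+1 *~ c i) 0 j = lform (labelled c) (alpha t n j.+1).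
Proof.
move=> sym; rewrite summxE /lform; apply: eq_bigr => i _.
by rewrite mulmxzE !mxE labelled_ord mulrC sym.
Qed.

Lemma cartanAD_sym t n : t = TA \/ t = TD -> forall i k, cartan t n i k = cartan t n k i.
Proof. by case=> -> i k; rewrite /cartan /adj eq_sym orbC. Qed.

Lemma parity_chain (C : nat -> int) N : C 0%N = 0 ->
  (forall p, (0 < p <= N)%N -> (2 %| C p.-1 + C p.+1)%Z) ->
  forall p, (p <= N.+1)%N -> (2 %| C p - C 1%N * (p %% 2)%N%:Z)%Z.
Proof.
move=> C0 hC.
suff H p : (p <= N)%N ->
    (2 %| C p - C 1%N * (p %% 2)%N%:Z)%Z /\ (2 %| C p.+1 - C 1%N * (p.+1 %% 2)%N%:Z)%Z.
  by case=> [|p] hp; [case: (H 0%N isT) | case: (H p hp)].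
elim: p => [|p IH] hp; first by rewrite C0 /=; split; lia.
case: (IH (ltnW hp)) => h0 h1; split=> //.
by have := hC p.+1 ltac:(lia); rewrite /=; lia.
Qed.

Lemma lat2_rootQ_Zmul_sum t n (c s : 'I_n -> int) z : (forall i, (2 %| c i - z * s i)%Z) ->
  latD (lat2 (rootQ t n)) (Zmul (\sum_(i < n) alpha t n i.+1 *~ s i))
       (\sum_(i < n) alpha t n i.+1 *~ c i).
Proof.
move=> hcs; pose d i := ((c i - z * s i) %/ 2)%Z.
have -> : \sum_(i < n) alpha t n i.+1 *~ c i =
    (\sum_(i < n) alpha t n i.+1 *~ d i) *+ 2 + (\sum_(i < n) alpha t n i.+1 *~ s i) *~ z.
  rewrite mulrz_suml -sumrMnl -big_split; apply: eq_bigr => i _.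
  have ec : c i = d i * 2 + s i * z by rewrite divzK ?hcs //; ring.
  by rewrite {1}ec; row_ring.
by apply: latD_intro; [apply/lat2_intro; exists d | apply: Zmul_intro].
Qed.

Lemma rootQ_cap_lat2_diamond t n (s : 'I_n -> int) :
  (forall i k, cartan t n i k = cartan t n k i) ->
  lat2 (weightL n) (\sum_(i < n) alpha t n i.+1 *~ s i) ->
  (forall c : 'I_n -> int,
     (forall p, (0 < p <= n)%N -> (2 %| lform (labelled c) (alpha t n p))%Z) ->
     exists z, forall i, (2 %| c i - z * s i)%Z) ->
  lat_eq (latI (rootQ t n) (lat2 (weightL n)))
         (latD (lat2 (rootQ t n)) (Zmul (\sum_(i < n) alpha t n i.+1 *~ s i))).
Proof.
move=> sym a2 ker v; split=> [[[c ->] /lat2_weightLP hv] | hv].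
  have [|z hz] := ker c; last exact: lat2_rootQ_Zmul_sum hz.
  move=> p hp; have hk : (p.-1 < n)%N by lia.
  by have := hv (Ordinal hk); rewrite rootQ_coord_sym //= prednK //; lia.
split.
  apply: zspan_latD hv => [_ [w [hw ->]] | u]; first exact: zspanMn.
  by apply: zspan_Zmul; exists s.
apply/lat2_weightLE; apply: zspan_latD hv => [_ [w [_ ->]] | u].
  exact/lat2_weightLE/lat2_intro/weightL_all.
by apply: zspan_Zmul; apply/lat2_weightLE.
Qed.

Definition odd_indicator n (i : 'I_n) : int := (i.+1 %% 2)%N%:Z.

Lemma alpha_diamondA n : alpha_diamond TA n = \sum_(i < n) alpha TA n i.+1 *~ odd_indicator i.
Proof.
rewrite /alpha_diamond big_mkcond /=; apply: eq_bigr => i _; rewrite /odd_indicator modn2.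
by case: ifP => /= ->; rewrite ?mulr1z ?mulr0z.
Qed.

Lemma labelled_odd_indicator n k :
  labelled (@odd_indicator n) k = if (0 < k <= n)%N then (k %% 2)%N%:Z else 0.
Proof.
case: ifP => hk; last by rewrite labelled_out // hk.
have hk' : (k.-1 < n)%N by lia.
have -> : k = (Ordinal hk').+1 by rewrite /= prednK //; lia.
by rewrite labelled_ord.
Qed.

Lemma A_odd_cap_lat2 n : odd n ->
  lat_eq (latI (rootQ TA n) (lat2 (weightL n)))
         (latD (lat2 (rootQ TA n)) (Zmul (alpha_diamond TA n))).
Proof.
move=> oddn; rewrite alpha_diamondA; apply: rootQ_cap_lat2_diamond.
- by apply: cartanAD_sym; left.
- apply/lat2_weightLP => j; rewrite rootQ_coord_sym; last by apply: cartanAD_sym; left.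
  rewrite alphaA; last by have := ltn_ord j; lia.
  rewrite !lformB lformMn !lform_lambda !labelled_odd_indicator.
  by have := ltn_ord j; case_lia.
move=> c hc; exists (labelled c 1); move=> i.
have hC p : (0 < p <= n)%N -> (2 %| labelled c p.-1 + labelled c p.+1)%Z.
  by move=> hp; apply: lform_labelled_chain_row; rewrite -alphaA //; apply: hc.
have := parity_chain (labelled_out c (k := 0) isT) hC (_ : i.+1 <= n.+1)%N.
by rewrite labelled_ord /odd_indicator mulrC; apply; have := ltn_ord i; lia.
Qed.

Lemma D_parity_kernel (C : nat -> int) n : odd n -> (5 <= n)%N -> C 0%N = 0 ->
  (forall p, (0 < p <= n - 3)%N -> (2 %| C p.-1 + C p.+1)%Z) ->
  (2 %| C (n - 3)%N + C n.-1 + C n)%Z -> (2 %| C (n - 2)%N)%Z ->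
  forall p, (0 < p <= n)%N -> (2 %| C p - C n * (if (n.-1 <= p)%N then 1 else 0))%Z.
Proof.
move=> oddn n5 C0 hchain hbranch hpenult.
have par := parity_chain C0 hchain.
have C1 : (2 %| C 1%N)%Z.
  by have := par (n - 2)%N ltac:(lia); rewrite (_ : (n - 2) %% 2 = 1)%N; [lia | lia].
have low q : (q <= n - 2)%N -> (2 %| C q)%Z.
  by move=> hq; have := par q ltac:(lia); move: C1; lia.
move=> p hp; have [hpn | [-> | ->]] : ((p <= n - 2) \/ p = n.-1 \/ p = n)%N by lia.
- by rewrite ifF; [move: (low p hpn); lia | lia].
- by rewrite ifT //; have := low (n - 3)%N ltac:(lia); move: hbranch; lia.
- by rewrite ifT ?leq_pred //; lia.
Qed.

Definition spin_indicator n (i : 'I_n) : int := if (n.-1 <= i.+1)%N then 1 else 0.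

Lemma alpha_diamondD n : (2 <= n)%N ->
  alpha_diamond TD n = \sum_(i < n) alpha TD n i.+1 *~ spin_indicator i.
Proof.
case: n => [|[|m]] // _; rewrite /alpha_diamond !big_ord_recr /= big1 ?add0r.
  by rewrite /spin_indicator /= leqnn ltnW // !mulr1z.
by move=> i _; rewrite /spin_indicator /= ifF ?mulr0z //; have := ltn_ord i; lia.
Qed.

Lemma alpha_diamondD_lambda n : (4 <= n)%N ->
  alpha_diamond TD n = (lambda n n.-1 + lambda n n - lambda n (n - 2)) *+ 2.
Proof. by move=> hn; rewrite /alpha_diamond alphaD_penult // alphaD_last //; row_ring. Qed.

Lemma D_odd_cap_lat2 n : odd n -> (5 <= n)%N ->
  lat_eq (latI (rootQ TD n) (lat2 (weightL n)))
         (latD (lat2 (rootQ TD n)) (Zmul (alpha_diamond TD n))).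
Proof.
move=> oddn n5; rewrite alpha_diamondD; last lia.
apply: rootQ_cap_lat2_diamond.
- by apply: cartanAD_sym; right.
- by rewrite -alpha_diamondD ?alpha_diamondD_lambda; [apply/lat2_intro/weightL_all | lia | lia].
move=> c hc; exists (labelled c n) => i; rewrite -labelled_ord.
have := @D_parity_kernel (labelled c) n oddn n5 (labelled_out c (k := 0) isT).
rewrite /spin_indicator; apply; last by have := ltn_ord i; lia.
- by move=> p hp; apply: lform_labelled_chain_row; rewrite -alphaD_chain ?hc //; lia.
- have := hc (n - 2)%N ltac:(lia); rewrite alphaD_branch; last lia.
  rewrite !lformB lformMn !lform_labelled_lambda mulr2n.
  by move: (labelled c _) (labelled c (n - 3)) (labelled c n.-1) (labelled c n) => a b d e; lia.
- have := hc n ltac:(lia); rewrite alphaD_last; last lia.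
  rewrite !lformB lformMn !lform_labelled_lambda mulr2n.
  by move: (labelled c n) (labelled c (n - 2)) => a b; lia.
Qed.

Lemma D_diamond_lform4 n v : (4 <= n)%N ->
  latD (lat2 (rootQ TD n)) (Zmul (alpha_diamond TD n)) v -> (4 %| lform (spin_diff n) v)%Z.
Proof.
move=> hn [_ [_ [[w [hw ->]] [[c ->] ->]]]]; rewrite big_ord1 lformD lformMn lformZ.
have -> : lform (spin_diff n) (alpha_diamond TD n) = 0.
  by rewrite /alpha_diamond lformD !lform_spin_diff_alphaD //; case_lia.
have := D_lform_spin_diff_even hn hw; rewrite mul0r addr0 mulr2n.
by move: (lform _ w) => x; lia.
Qed.

Lemma D_odd_diamond_neq n : (4 <= n)%N ->
  ~ lat_eq (latD (lat2 (rootQ TD n)) (Zmul (alpha_diamond TD n))) (lat2 (weightL n)).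
Proof.
move=> hn /(_ (lambda n n *+ 2)) [_ /(_ (lat2_intro (weightL_all _)))] /(D_diamond_lform4 hn).
by rewrite lformMn lform_lambda /spin_diff; case_lia.
Qed.

Lemma lform_spin_diff_last2 m (v : 'rV[int]_m.+3) :
  lform (spin_diff m.+3) v = v 0 (widen_ord (leqnSn _) ord_max) - v 0 ord_max.
Proof.
rewrite /lform 2!big_ord_recr /= big1 ?add0r => [|i _].
  rewrite /spin_diff /= eqxx (_ : (m.+3 == m.+2) = false) ?eqxx; last by lia.
  by rewrite mul1r mulN1r.
by rewrite /spin_diff /= !ifF ?mul0r //; have := ltn_ord i; lia.
Qed.

Lemma D_spin_decomp n v : (4 <= n)%N -> lat2 (weightL n) v -> (4 %| lform (spin_diff n) v)%Z ->
  latD (latD (latD (Zmul (lambda n n.-1 *+ 4)) (Zmul (lambda n n *+ 4))) (Zmul (alpha_diamond TD n)))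
       (zspan (fun i : 'I_(n - 2) => lambda n i.+1 *+ 2)) v.
Proof.
case: n v => [|[|[|m]]] // v hm /lat2_weightLP v2.
rewrite lform_spin_diff_last2 => /dvdzP [q eq4].
have /dvdzP [r er] := v2 ord_max.
pose low i := widen_ord (leqnSn m.+2) (widen_ord (leqnSn m.+1) i).
pose S := \sum_(i < m.+1) (lambda m.+3 i.+1 *+ 2) *~ (v 0%R (low i) %/ 2)%Z.
(* With v_(n-1) - v_n = 4 q and v_n = 2 r, the last two coordinates of v contribute
   v_(n-1) lambda_(n-1) + v_n lambda_n = q (4 lambda_(n-1)) + r alpha^diamond + r (2 lambda_(n-2)). *)
have -> : v = ((lambda m.+3 m.+2 *+ 4) *~ q + 0 + alpha_diamond TD m.+3 *~ r)
              + (S + (lambda m.+3 m.+1 *+ 2) *~ r).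
  have -> : S = \sum_(i < m.+1) lambda m.+3 i.+1 *~ v 0 (low i).
    by apply: eq_bigr => i _; rewrite -mulrzMn pmulrn -mulrzA divzK ?v2.
  rewrite alpha_diamondD_lambda // {1}[v]row_lambda_expansion 2!big_ord_recr /=.
  move: eq4 er; set a := v 0 _; set b := v 0 ord_max => eq4 er.
  have -> : a = r * 2 + q * 4 by move: eq4; lia.
  by rewrite er !subSS subn0; row_ring.
apply: latD_intro; last first.
  apply: zspanD; last exact/zspanZ/(zspan_gen (fun i : 'I_m.+1 => lambda m.+3 i.+1 *+ 2) ord_max).
  by apply: zspan_sum => i _; apply/zspanZ/(zspan_gen (fun i : 'I_m.+1 => lambda m.+3 i.+1 *+ 2)).
apply: latD_intro; last exact: Zmul_intro.
by apply: latD_intro; [apply: Zmul_intro | apply: zspan0].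
Qed.

Lemma zspan_spin_lattice n (I : finType) (g : I -> 'rV[int]_n) v :
  zspan g (lambda n n.-1 *+ 4) -> zspan g (lambda n n *+ 4) -> zspan g (alpha_diamond TD n) ->
  (forall i : 'I_(n - 2), zspan g (lambda n i.+1 *+ 2)) ->
  latD (latD (latD (Zmul (lambda n n.-1 *+ 4)) (Zmul (lambda n n *+ 4))) (Zmul (alpha_diamond TD n)))
       (zspan (fun i : 'I_(n - 2) => lambda n i.+1 *+ 2)) v -> zspan g v.
Proof.
move=> h1 h2 h3 h4; apply: zspan_latD => [u | u]; last exact: zspan_sub.
apply: zspan_latD => [w | w]; last exact: zspan_Zmul.
by apply: zspan_latD => x; apply: zspan_Zmul.
Qed.

Lemma D_odd_diamond_span n : odd n -> (5 <= n)%N ->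
  lat_eq (latD (lat2 (rootQ TD n)) (Zmul (alpha_diamond TD n)))
         (latD (latD (latD (Zmul (lambda n n.-1 *+ 4)) (Zmul (lambda n n *+ 4)))
                     (Zmul (alpha_diamond TD n)))
               (zspan (fun i : 'I_(n - 2) => lambda n i.+1 *+ 2))).
Proof.
move=> oddn n5 v; have n4 : (4 <= n)%N by lia.
have capE := D_odd_cap_lat2 oddn n5.
split=> [hv | hv].
  have [_ v2] := (capE v).2 hv.
  exact: D_spin_decomp n4 v2 (D_diamond_lform4 n4 hv).
apply/capE; split.
  have [l4 l4'] := D_spin_muln4 n4.
  apply: zspan_spin_lattice hv => // [|i]; first by apply: zspanD; apply: rootQ_alpha; lia.
  by apply: D_lambda_muln2 => //; have := ltn_ord i; lia.
apply/lat2_weightLE; apply: zspan_spin_lattice hv => [|||i]; apply/lat2_weightLE.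
- by rewrite -[4%N]/(2 * 2)%N mulrnA; apply/lat2_intro/weightL_all.
- by rewrite -[4%N]/(2 * 2)%N mulrnA; apply/lat2_intro/weightL_all.
- by rewrite alpha_diamondD_lambda //; apply/lat2_intro/weightL_all.
- exact/lat2_intro/weightL_all.
Qed.

Lemma A_odd_diamond_neq n : odd n -> (3 <= n)%N ->
  ~ lat_eq (latD (lat2 (rootQ TA n)) (Zmul (alpha_diamond TA n))) (lat2 (weightL n)).
Proof.
move=> oddn n3 /(_ (lambda n 1 *+ 2)) [_ /(_ (lat2_intro (weightL_all _)))].
by move=> /(A_odd_cap_lat2 oddn) [hQ _]; apply: A_lambda1_muln_notin hQ; lia.
Qed.

Theorem proposition2p2 :
  (* (a) A_{2k} (k >= 1), E_6 *)
  (forall (t : dynkin) (n : nat),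
     ((t = TA /\ exists k : nat, (1 <= k)%N /\ n = (2 * k)%N) \/ (t = TE /\ n = 6%N)) ->
     lat_eq (latI (rootQ t n) (lat2 (weightL n))) (lat2 (rootQ t n)) /\
     ~ lat_eq (lat2 (rootQ t n)) (lat2 (weightL n))) /\
  (* (b) A_1, B_n, C_n, D_{2k+2} (k >= 1), E_7 *)
  (forall (t : dynkin) (n : nat),
     (t = TA /\ n = 1%N) \/ (t = TB /\ (2 <= n)%N) \/ (t = TC /\ (2 <= n)%N) \/
     (t = TD /\ (exists k : nat, (1 <= k)%N /\ n = (2 * k + 2)%N)) \/ (t = TE /\ n = 7%N) ->
     lat_eq (latI (rootQ t n) (lat2 (weightL n))) (lat2 (weightL n)) /\
     ~ lat_eq (lat2 (weightL n)) (lat2 (rootQ t n))) /\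
  (* (c) E_8, F_4, G_2 *)
  (forall (t : dynkin) (n : nat),
     (t = TE /\ n = 8%N) \/ (t = TF /\ n = 4%N) \/ (t = TG /\ n = 2%N) ->
     lat_eq (latI (rootQ t n) (lat2 (weightL n))) (lat2 (weightL n)) /\
     lat_eq (lat2 (weightL n)) (lat2 (rootQ t n))) /\
  (* (d) A_{2k+1}, D_{2k+3} (k >= 1) *)
  (forall (t : dynkin) (n : nat),
     (exists k : nat, (1 <= k)%N /\
        ((t = TA /\ n = (2 * k + 1)%N) \/ (t = TD /\ n = (2 * k + 3)%N))) ->
     lat_eq (latI (rootQ t n) (lat2 (weightL n)))
            (latD (lat2 (rootQ t n)) (Zmul (alpha_diamond t n))) /\
     ~ lat_eq (latD (lat2 (rootQ t n)) (Zmul (alpha_diamond t n))) (lat2 (weightL n))) /\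
  (* moreover: D_n, n odd (n >= 5) *)
  (forall n : nat, (5 <= n)%N -> odd n ->
     lat_eq (latD (lat2 (rootQ TD n)) (Zmul (alpha_diamond TD n)))
            (latD (latD (latD (Zmul (lambda n n.-1 *+ 4)) (Zmul (lambda n n *+ 4)))
                        (Zmul (alpha_diamond TD n)))
                  (zspan (fun i : 'I_(n - 2) => lambda n i.+1 *+ 2)))).
Proof.
split.
  move=> t n [[-> [k [k1 ->]]] | [-> ->]]; split.
  - by apply: (@rootQ_cap_lat2_odd _ _ (2 * k).+1) => [|i _]; [lia | apply: A_muln].
  - by apply: (lat2_rootQ_neq (A_lambda1_notin _)); lia.
  - exact: rootQ_cap_lat2_odd E6_lambda_muln3.
  - exact: lat2_rootQ_neq E6_lambda1_notin.
split.
  move=> t n [[-> ->] | [[-> n2] | [[-> n2] | [[-> [k [k1 ->]]] | [-> ->]]]]]; split.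
  - by apply: rootQ_cap_lat2_two => i _; apply: A_muln.
  - exact: lat2_weightL_neq (A_lambda1_notin _).
  - by apply: rootQ_cap_lat2_two => i _; apply: B_lambda_muln2.
  - exact: lat2_weightL_neq (B_lambda_last_notin n2).
  - by apply: rootQ_cap_lat2_two => i _; apply: C_lambda_muln2.
  - exact: lat2_weightL_neq (C_lambda1_notin n2).
  - by apply: rootQ_cap_lat2_two => i _; apply: D_even_lambda_muln2; lia.
  - by apply: (lat2_weightL_neq (D_lambda_last_notin _)); lia.
  - exact: rootQ_cap_lat2_two E7_lambda_muln2.
  - exact: lat2_weightL_neq E7_lambda2_notin.
split.
  move=> t n [[-> ->] | [[-> ->] | [-> ->]]]; apply: rootQ_full;
    [exact: E8_lambda | exact: F4_lambda | exact: G2_lambda].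
split; last by move=> n n5 oddn; apply: D_odd_diamond_span.
move=> t n [k [k1 [[-> ->] | [-> ->]]]].
  have oddn : odd (2 * k + 1) by lia.
  by split; [apply: A_odd_cap_lat2 | apply: A_odd_diamond_neq => //; lia].
have oddn : odd (2 * k + 3) by lia.
by split; [apply: D_odd_cap_lat2 => //; lia | apply: D_odd_diamond_neq; lia].
Qed.
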